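(* Let $H_1,H_2$ be separable Hilbert spaces, $K\in B(H_1)$, $L\in B(H_2)$. Let $\{x_n\}_{n\geqslant1}$ be a $K$-frame for $H_1$ with a $K$-dual frame $\{f_n\}_{n\geqslant1}$, and $\{y_n\}_{n\geqslant1}$ an $L$-frame for $H_2$ with an $L$-dual frame $\{g_n\}_{n\geqslant1}$. Let $T_1,T_2$ be the synthesis operators of $\{x_n\}$ and $\{y_n\}$, and $\theta_1,\theta_2$ the analysis operators of $\{f_n\}$ and $\{g_n\}$, respectively. The following are equivalent: (i) $\{x_n\oplus y_n\}_{n\geqslant1}$ is a $K\oplus L$-frame for $H_1\oplus H_2$ and $\{f_n\oplus g_n\}_{n\geqslant1}$ is a $K\oplus L$-dual frame to it; (ii) $T_2\theta_1=0$ (as an operator $H_1\to H_2$) and $T_1\theta_2=0$ (as an operator $H_2\to H_1$).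
   Context: $H_1\oplus H_2$ is the Hilbert space of pairs $x\oplus y$ with inner product $\langle x\oplus y,a\oplus b\rangle=\langle x,a\rangle+\langle y,b\rangle$; $(K\oplus L)(x\oplus y)=K(x)\oplus L(y)$. For a Hilbert space $H$ and $K\in B(H)$, $\{z_n\}_{n\geqslant1}$ is a $K$-frame if there are $A,B>0$ with $A\|K^*z\|^2\leq\sum_n|\langle z,z_n\rangle|^2\leq B\|z\|^2$ for all $z\in H$. A $K$-dual frame to a $K$-frame $\{z_n\}$ is a Bessel sequence $\{f_n\}$ in $H$ with $Kz=\sum_n\langle z,f_n\rangle z_n$ for all $z\in H$. For a Bessel sequence $\{z_n\}$: synthesis operator $T:\ell^2\to H$, $T(\{a_n\})=\sum_na_nz_n$; analysis operator $\theta:H\to\ell^2$, $\theta(z)=\{\langle z,z_n\rangle\}_n$. *)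

From HB Require Import structures.
From mathcomp Require Import all_boot all_order all_algebra.
From mathcomp Require Import complex.
From mathcomp Require Import all_classical all_reals ereal topology normedtype sequences.
Set Implicit Arguments. Unset Strict Implicit. Unset Printing Implicit Defensive.
Import Order.TTheory GRing.Theory Num.Theory.
Import numFieldNormedType.Exports.
Local Open Scope classical_set_scope.
Local Open Scope ring_scope.

Section HilbertDefs.
Variable R : realType.
Local Notation C := (complex R).

Definition inner_product (V : lmodType C) (ip : V -> V -> C) : Prop :=
  [/\ (forall (a : C) (x y z : V), ip (a *: x + y) z = a * ip x z + ip y z),
      (forall x y : V, ip y x = conjc (ip x y)),
      (forall x : V, 0 <= ip x x) &
      (forall x : V, ip x x = 0 -> x = 0)].

Definition nsq (V : lmodType C) (ip : V -> V -> C) (x : V) : R := complex.Re (ip x x).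
Definition hnorm (V : lmodType C) (ip : V -> V -> C) (x : V) : R :=
  Num.sqrt (nsq ip x).

Definition csq (c : C) : R := complex.Re c ^+ 2 + complex.Im c ^+ 2.

Definition has_sum (V : lmodType C) (ip : V -> V -> C) (u : nat -> V) (s : V) :=
  (fun N : nat => hnorm ip (s - \sum_(n < N) u n)) @ \oo --> (0 : R).

Definition complete_ip (V : lmodType C) (ip : V -> V -> C) : Prop :=
  forall u : nat -> V,
    (forall e : R, 0 < e -> exists N : nat, forall m n : nat,
        (N <= m)%N -> (N <= n)%N -> hnorm ip (u m - u n) < e) ->
    exists l : V, (fun n : nat => hnorm ip (u n - l)) @ \oo --> (0 : R).

Definition separable_ip (V : lmodType C) (ip : V -> V -> C) : Prop :=
  exists d : nat -> V, forall (x : V) (e : R), 0 < e ->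
    exists n : nat, hnorm ip (x - d n) < e.

Definition hilbert_space (V : lmodType C) (ip : V -> V -> C) : Prop :=
  inner_product ip /\ complete_ip ip.

Definition separable_hilbert_space (V : lmodType C) (ip : V -> V -> C) : Prop :=
  hilbert_space ip /\ separable_ip ip.

Definition bounded_operator (V W : lmodType C) (ipV : V -> V -> C)
    (ipW : W -> W -> C) (K : V -> W) : Prop :=
  (forall (a : C) (x y : V), K (a *: x + y) = a *: K x + K y) /\
  exists M : R, forall x : V, hnorm ipW (K x) <= M * hnorm ipV x.

Definition is_adjoint (V W : lmodType C) (ipV : V -> V -> C)
    (ipW : W -> W -> C) (K : V -> W) (Ks : W -> V) : Prop :=
  forall (x : V) (y : W), ipW (K x) y = ipV x (Ks y).

Definition frame_sum (V : lmodType C) (ip : V -> V -> C) (z : nat -> V) (w : V)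
  : \bar R := (\sum_(0 <= n <oo) ((csq (ip w (z n)))%:E))%E.

Definition bessel (V : lmodType C) (ip : V -> V -> C) (z : nat -> V) : Prop :=
  exists B : R, 0 < B /\ forall w : V, (frame_sum ip z w <= (B * nsq ip w)%:E)%E.

Definition K_frame (V : lmodType C) (ip : V -> V -> C) (K : V -> V)
    (z : nat -> V) : Prop :=
  exists A B : R, [/\ 0 < A, 0 < B &
    forall Ks : V -> V, is_adjoint ip ip K Ks -> forall w : V,
      ((A * nsq ip (Ks w))%:E <= frame_sum ip z w)%E /\
      (frame_sum ip z w <= (B * nsq ip w)%:E)%E].

Definition K_dual_frame (V : lmodType C) (ip : V -> V -> C) (K : V -> V)
    (z f : nat -> V) : Prop :=
  bessel ip f /\ forall w : V, has_sum ip (fun n => ip w (f n) *: z n) (K w).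

Definition analysis (V : lmodType C) (ip : V -> V -> C) (z : nat -> V) (w : V)
  : nat -> C := fun n => ip w (z n).

(* synthesis operator, relationally: T(a) = s, i.e. sum_n a_n z_n = s *)
Definition synthesis_eq (V : lmodType C) (ip : V -> V -> C) (z : nat -> V)
    (a : nat -> C) (s : V) : Prop := has_sum ip (fun n => a n *: z n) s.

Definition ip_sum (V W : lmodType C) (ipV : V -> V -> C) (ipW : W -> W -> C)
    (p q : V * W) : C := ipV p.1 q.1 + ipW p.2 q.2.

Definition op_sum (V W : lmodType C) (K : V -> V) (L : W -> W) (p : V * W)
  : V * W := (K p.1, L p.2).

End HilbertDefs.

From HB Require Import structures.
From mathcomp Require Import all_boot all_order all_algebra.
From mathcomp Require Import complex.
From mathcomp Require Import all_classical all_reals ereal topology normedtype sequences.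
From mathcomp Require Import ring lra.
Import Order.TTheory GRing.Theory Num.Theory.
Import numFieldNormedType.Exports.
Set Implicit Arguments. Unset Strict Implicit. Unset Printing Implicit Defensive.
Local Open Scope classical_set_scope.
Local Open Scope ring_scope.

(* Everything is componentwise in H1 (+) H2.  The n-th term of the
   reconstruction series of (f_n, g_n) at (w1, w2) is
   (<w1, f_n> + <w2, g_n>) (x_n, y_n); its first component is the
   K-reconstruction term of w1 plus the n-th term of T1 theta2 w2, and its
   second component is the L-reconstruction term of w2 plus the n-th term of
   T2 theta1 w1.  Hence the reconstruction formula for K (+) L holds exactly
   when both cross series vanish.  Bessel bounds pass to direct sums because
   |a + b|^2 <= 2|a|^2 + 2|b|^2, and the lower frame bound is automatic: if
   {F_n} is a K-dual Bessel sequence of {X_n} with bound B and u = K^* w, then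
   ||u||^2 = Re <K u, w> = lim_N Re <sum_(n<N) <u, F_n> X_n, w>, and AM-GM on
   each term, 2B Re(a conj b) <= |a|^2 + B^2 |b|^2, gives
   2B ||u||^2 <= B ||u||^2 + B^2 sum_n |<w, X_n>|^2. *)

Section ComplexSquares.
Variable R : realType.
Local Notation C := (complex R).
Implicit Types a b : C.

Lemma csq_ge0 a : 0 <= csq a.
Proof. by rewrite /csq addr_ge0 ?sqr_ge0. Qed.

Lemma csqD_le a b : csq (a + b) <= 2 * csq a + 2 * csq b.
Proof.
case: a b => [a1 a2] [b1 b2]; rewrite /csq /=.
have := sqr_ge0 (a1 - b1); have := sqr_ge0 (a2 - b2); rewrite !expr2; nra.
Qed.

Lemma Re_mul_conjc_le (t : R) a b :
  2 * t * complex.Re (a * conjc b) <= csq a + t ^+ 2 * csq b.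
Proof.
case: a b => [a1 a2] [b1 b2]; rewrite /csq /=.
have := sqr_ge0 (a1 - t * b1); have := sqr_ge0 (a2 - t * b2); rewrite !expr2; nra.
Qed.

End ComplexSquares.

Section InnerProduct.
Variable R : realType.
Local Notation C := (complex R).
Variables (V : lmodType C) (ip : V -> V -> C).
Hypothesis hip : inner_product ip.

Lemma ipC x y : ip y x = conjc (ip x y).
Proof. by case: hip. Qed.

Lemma ipD x y z : ip (x + y) z = ip x z + ip y z.
Proof. by case: hip => ipDZ _ _ _; have := ipDZ 1 x y z; rewrite scale1r mul1r. Qed.

Lemma ip0l z : ip 0 z = 0.
Proof. by apply: (addrI (ip 0 z)); rewrite -ipD !addr0. Qed.

Lemma ip0r z : ip z 0 = 0.
Proof. by rewrite ipC ip0l conjc0. Qed.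

Lemma ipZ a x z : ip (a *: x) z = a * ip x z.
Proof. by case: hip => ipDZ _ _ _; rewrite -[a *: x]addr0 ipDZ ip0l addr0. Qed.

Lemma ipN x z : ip (- x) z = - ip x z.
Proof. by rewrite -scaleN1r ipZ mulN1r. Qed.

Lemma ip_suml N (u : nat -> V) z :
  ip (\sum_(n < N) u n) z = \sum_(n < N) ip (u n) z.
Proof.
elim: N => [|N IH]; first by rewrite !big_ord0 ip0l.
by rewrite !big_ord_recr /= ipD IH.
Qed.

Lemma Re_ipC x y : complex.Re (ip y x) = complex.Re (ip x y).
Proof. by rewrite ipC; case: (ip x y). Qed.

Lemma Re_ipZ (t : R) x z : complex.Re (ip ((t%:C)%C *: x) z) = t * complex.Re (ip x z).
Proof. by rewrite ipZ; case: (ip x z) => a b /=; rewrite mul0r subr0. Qed.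

Lemma Re_ipN x z : complex.Re (ip (- x) z) = - complex.Re (ip x z).
Proof. by rewrite ipN raddfN. Qed.

Lemma nsq_ge0 x : 0 <= nsq ip x.
Proof. by case: hip => _ _ ge0 _; have := ge0 x; rewrite lecE => /andP[]. Qed.

Lemma nsq_eq0 x : nsq ip x = 0 -> x = 0.
Proof.
case: hip => _ _ ge0 def0 nx0; apply: def0; apply/eqP.
by rewrite eq_complex -/(nsq ip x) nx0 (ger0_Im (ge0 x)) eqxx.
Qed.

Lemma nsqD x y :
  nsq ip (x + y) = nsq ip x + nsq ip y + 2 * complex.Re (ip x y).
Proof.
rewrite /nsq ipD raddfD /= !(Re_ipC (x + y)) !ipD !raddfD /= (Re_ipC y x).
by rewrite mulr2n mulrDl mul1r; lra.
Qed.

Lemma nsqN x : nsq ip (- x) = nsq ip x.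
Proof. by rewrite /nsq Re_ipN Re_ipC Re_ipN opprK. Qed.

Lemma nsqZ (t : R) x : nsq ip ((t%:C)%C *: x) = t ^+ 2 * nsq ip x.
Proof. by rewrite /nsq Re_ipZ Re_ipC Re_ipZ mulrA -expr2. Qed.

Lemma Re_ip_amgm (t : R) x y :
  2 * t * complex.Re (ip x y) <= t ^+ 2 * nsq ip x + nsq ip y.
Proof.
have := nsq_ge0 ((t%:C)%C *: x - y).
by rewrite nsqD nsqN nsqZ Re_ipC Re_ipN Re_ipC Re_ipZ; lra.
Qed.

(* Cauchy-Schwarz for the real part: AM-GM with t = Re <x, y> / ||x||^2. *)
Lemma Re_ip_sqr_le x y : complex.Re (ip x y) ^+ 2 <= nsq ip x * nsq ip y.
Proof.
have [/nsq_eq0 ->|nx0] := eqVneq (nsq ip x) 0.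
  by rewrite /nsq !ip0l raddf0 expr0n mul0r.
have nx_gt0 : 0 < nsq ip x by rewrite lt0r nx0 nsq_ge0.
set r := complex.Re (ip x y); set n := nsq ip x.
have := Re_ip_amgm (r / n) x y; rewrite -/r -/n => /(ler_wpM2l (ltW nx_gt0)).
have -> : n * (2 * (r / n) * r) = 2 * r ^+ 2 by field.
have -> : n * ((r / n) ^+ 2 * n + nsq ip y) = r ^+ 2 + n * nsq ip y by field.
lra.
Qed.

Lemma Re_ip_le_hnorm x y : `|complex.Re (ip x y)| <= hnorm ip x * hnorm ip y.
Proof.
rewrite /hnorm -sqrtrM ?nsq_ge0 // -sqrtr_sqr.
exact/ler_wsqrtr/Re_ip_sqr_le.
Qed.

Lemma hnorm_ge0 x : 0 <= hnorm ip x.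
Proof. exact: sqrtr_ge0. Qed.

Lemma sqr_hnorm x : hnorm ip x ^+ 2 = nsq ip x.
Proof. by rewrite sqr_sqrtr ?nsq_ge0. Qed.

Lemma hnormD_le x y : hnorm ip (x + y) <= hnorm ip x + hnorm ip y.
Proof.
rewrite -(@ler_pXn2r _ 2) ?nnegrE ?addr_ge0 ?hnorm_ge0 //.
rewrite sqrrD !sqr_hnorm nsqD.
have := Re_ip_le_hnorm x y; rewrite ler_norml => /andP[_].
lra.
Qed.

End InnerProduct.

Lemma squeeze_cvg0 (R : realType) (a b : nat -> R) :
  (forall n, 0 <= a n <= b n) -> b @ \oo --> 0 -> a @ \oo --> 0.
Proof.
move=> ab bl; apply: (squeeze_cvgr (f := fun=> 0) (h := b)) bl.
  exact: nearW.
exact: cvg_cst.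
Qed.

Lemma lee_fin_of_ub (R : realType) (a : R) (S : \bar R) :
  (forall M : R, (S <= M%:E)%E -> a <= M) -> (a%:E <= S)%E.
Proof.
case: S => [s||] h; first by rewrite lee_fin h.
- by rewrite leey.
- by exfalso; have := h (a - 1) (leNye _); lra.
Qed.

Section Frames.
Variable R : realType.
Local Notation C := (complex R).
Variables (V : lmodType C) (ip : V -> V -> C).
Hypothesis hip : inner_product ip.

Lemma eq_has_sum (u v : nat -> V) s : has_sum ip u s -> u =1 v -> has_sum ip v s.
Proof. by move=> + /funext <-. Qed.

Lemma has_sumD (u v : nat -> V) s t :
  has_sum ip u s -> has_sum ip v t -> has_sum ip (fun n => u n + v n) (s + t).
Proof.
move=> hu hv; apply: (@squeeze_cvg0 _ _
  (fun N => hnorm ip (s - \sum_(n < N) u n) + hnorm ip (t - \sum_(n < N) v n))).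
  by move=> N; rewrite hnorm_ge0 big_split /= opprD addrACA hnormD_le.
by rewrite -[X in _ --> X]addr0; exact: cvgD hu hv.
Qed.

Lemma has_sum_Re_ip (u : nat -> V) s w : has_sum ip u s ->
  (fun N => complex.Re (ip (\sum_(n < N) u n) w)) @ \oo --> complex.Re (ip s w).
Proof.
move=> hs; set d := fun N => s - \sum_(n < N) u n.
have Re_d0 : (fun N => complex.Re (ip (d N) w)) @ \oo --> 0.
  apply: (squeeze_cvgr (f := fun N => - (hnorm ip (d N) * hnorm ip w))
                       (h := fun N => hnorm ip (d N) * hnorm ip w)).
  - by apply: nearW => N; rewrite -ler_norml Re_ip_le_hnorm.
  - by rewrite -oppr0 -(mul0r (hnorm ip w)); apply: cvgN; exact: cvgM hs (cvg_cst _).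
  - by rewrite -(mul0r (hnorm ip w)); exact: cvgM hs (cvg_cst _).
rewrite -[X in _ --> X]subr0.
have -> : (fun N => complex.Re (ip (\sum_(n < N) u n) w))
          = (fun N => complex.Re (ip s w) - complex.Re (ip (d N) w)).
  by apply/funext => N; rewrite /d ipD // ipN // raddfD raddfN /= opprB addrC subrK.
exact: cvgB (cvg_cst _) Re_d0.
Qed.

Lemma frame_sum_leP (z : nat -> V) w (M : R) :
  (frame_sum ip z w <= M%:E)%E <-> forall N, \sum_(n < N) csq (ip w (z n)) <= M.
Proof.
have csq_ge0E n : (0 <= (csq (ip w (z n)))%:E)%E by rewrite lee_fin csq_ge0.
split=> [h N|h].
  rewrite -lee_fin; apply: le_trans h.
  rewrite -sumEFin -(big_mkord xpredT (fun n => (csq (ip w (z n)))%:E)).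
  exact: nneseries_lim_ge.
apply: lime_le; first exact: is_cvg_nneseries.
by apply: nearW => N /=; rewrite sumEFin lee_fin big_mkord.
Qed.

Lemma Re_ip_synthesis_le (a : nat -> C) (z : nat -> V) w (t : R) N :
  2 * t * complex.Re (ip (\sum_(n < N) a n *: z n) w)
  <= \sum_(n < N) csq (a n) + t ^+ 2 * \sum_(n < N) csq (ip w (z n)).
Proof.
rewrite (ip_suml hip N (fun n => a n *: z n)) raddf_sum !mulr_sumr -big_split /=.
apply: ler_sum => n _.
by rewrite ipZ // (ipC hip w (z n)) Re_mul_conjc_le.
Qed.

Lemma K_dual_frame_lower_bound (K Ks : V -> V) (X F : nat -> V) (B : R) :
  0 < B -> (forall u, (frame_sum ip F u <= (B * nsq ip u)%:E)%E) ->
  (forall u, has_sum ip (fun n => ip u (F n) *: X n) (K u)) ->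
  is_adjoint ip ip K Ks ->
  forall w, ((B^-1 * nsq ip (Ks w))%:E <= frame_sum ip X w)%E.
Proof.
move=> B_gt0 besselF recon adj w; apply: lee_fin_of_ub => M /frame_sum_leP XM.
set u := Ks w.
have partial N : 2 * B * complex.Re (ip (\sum_(n < N) ip u (F n) *: X n) w)
                 <= B * nsq ip u + B ^+ 2 * M.
  apply: (le_trans (Re_ip_synthesis_le (fun n => ip u (F n)) X w B N)).
  apply: lerD; first by move/frame_sum_leP: (besselF u).
  by apply: ler_wpM2l; [rewrite exprn_ge0 // ltW | exact: XM].
have lim_le : 2 * B * complex.Re (ip (K u) w) <= B * nsq ip u + B ^+ 2 * M.
  exact: ler_cvg_to (cvgM (cvg_cst _) (has_sum_Re_ip (w := w) (recon u)))
                    (cvg_cst _) (nearW _ partial).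
by move: lim_le; rewrite adj ler_pdivrMl //; nra.
Qed.

End Frames.

Section DirectSum.
Variable R : realType.
Local Notation C := (complex R).
Variables (V1 V2 : lmodType C) (ip1 : V1 -> V1 -> C) (ip2 : V2 -> V2 -> C).
Hypotheses (hip1 : inner_product ip1) (hip2 : inner_product ip2).
Local Notation ipS := (ip_sum ip1 ip2).

Lemma inner_product_ip_sum : inner_product ipS.
Proof.
case: hip1 => l1 c1 p1 d1; case: hip2 => l2 c2 p2 d2; split.
- move=> a [x1 x2] [y1 y2] [z1 z2]; rewrite /ip_sum /= l1 l2 mulrDr.
  by rewrite -!addrA; congr (_ + _); rewrite addrCA.
- by move=> [x1 x2] [y1 y2]; rewrite /ip_sum /= c1 c2 rmorphD.
- by move=> [x1 x2]; rewrite /ip_sum /= addr_ge0.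
- move=> [x1 x2]; rewrite /ip_sum /= => /eqP; rewrite paddr_eq0 //.
  by case/andP => /eqP /d1 -> /eqP /d2 ->.
Qed.

Lemma nsq_ip_sum p : nsq ipS p = nsq ip1 p.1 + nsq ip2 p.2.
Proof. by rewrite /nsq /ip_sum raddfD. Qed.

Lemma hnorm_fst_le_ip_sum p : hnorm ip1 p.1 <= hnorm ipS p.
Proof. by apply: ler_wsqrtr; rewrite nsq_ip_sum lerDl nsq_ge0. Qed.

Lemma hnorm_snd_le_ip_sum p : hnorm ip2 p.2 <= hnorm ipS p.
Proof. by apply: ler_wsqrtr; rewrite nsq_ip_sum lerDr nsq_ge0. Qed.

Lemma hnorm_ip_sum_le p : hnorm ipS p <= hnorm ip1 p.1 + hnorm ip2 p.2.
Proof.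
rewrite -(@ler_pXn2r _ 2) ?nnegrE ?addr_ge0 ?hnorm_ge0 //.
rewrite sqrrD (sqr_hnorm inner_product_ip_sum) (sqr_hnorm hip1) (sqr_hnorm hip2).
rewrite nsq_ip_sum.
have := hnorm_ge0 ip1 p.1; have := hnorm_ge0 ip2 p.2; nra.
Qed.

Lemma fst_sum I (r : seq I) (P : pred I) (F : I -> V1 * V2) :
  (\sum_(i <- r | P i) F i).1 = \sum_(i <- r | P i) (F i).1.
Proof. exact: (big_morph fst (fun _ _ => erefl) erefl). Qed.

Lemma snd_sum I (r : seq I) (P : pred I) (F : I -> V1 * V2) :
  (\sum_(i <- r | P i) F i).2 = \sum_(i <- r | P i) (F i).2.
Proof. exact: (big_morph snd (fun _ _ => erefl) erefl). Qed.

Lemma has_sum_pairP (u : nat -> V1 * V2) s :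
  has_sum ipS u s <->
  has_sum ip1 (fun n => (u n).1) s.1 /\ has_sum ip2 (fun n => (u n).2) s.2.
Proof.
split=> [hs | [h1 h2]].
  split; apply: squeeze_cvg0 hs => N; rewrite hnorm_ge0 /=.
    by have := hnorm_fst_le_ip_sum (s - \sum_(n < N) u n); rewrite /= fst_sum.
  by have := hnorm_snd_le_ip_sum (s - \sum_(n < N) u n); rewrite /= snd_sum.
apply: (@squeeze_cvg0 _ _ (fun N => hnorm ip1 (s.1 - \sum_(n < N) (u n).1)
                                  + hnorm ip2 (s.2 - \sum_(n < N) (u n).2))).
  move=> N; rewrite hnorm_ge0.
  by have := hnorm_ip_sum_le (s - \sum_(n < N) u n); rewrite /= fst_sum snd_sum.
by rewrite -[X in _ --> X]addr0; exact: cvgD h1 h2.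
Qed.

Lemma frame_sum_pair_le (a : nat -> V1) (b : nat -> V2) w1 w2 (B1 B2 : R) :
  0 <= B1 -> 0 <= B2 ->
  (frame_sum ip1 a w1 <= (B1 * nsq ip1 w1)%:E)%E ->
  (frame_sum ip2 b w2 <= (B2 * nsq ip2 w2)%:E)%E ->
  (frame_sum ipS (fun n => (a n, b n)) (w1, w2)
     <= ((2 * B1 + 2 * B2) * nsq ipS (w1, w2))%:E)%E.
Proof.
move=> B1_ge0 B2_ge0 /frame_sum_leP h1 /frame_sum_leP h2; apply/frame_sum_leP => N.
apply: le_trans (_ : \sum_(n < N) (2 * csq (ip1 w1 (a n)) + 2 * csq (ip2 w2 (b n))) <= _).
  by apply: ler_sum => n _; exact: csqD_le.
rewrite big_split /= -!mulr_sumr nsq_ip_sum /=.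
have := h1 N; have := h2 N; have := nsq_ge0 hip1 w1; have := nsq_ge0 hip2 w2; nra.
Qed.

Lemma bessel_pair (a : nat -> V1) (b : nat -> V2) :
  bessel ip1 a -> bessel ip2 b -> bessel ipS (fun n => (a n, b n)).
Proof.
move=> [B1 [B1_gt0 h1]] [B2 [B2_gt0 h2]].
exists (2 * B1 + 2 * B2); split.
  by rewrite addr_gt0 ?mulr_gt0.
by case=> w1 w2; exact: frame_sum_pair_le (ltW B1_gt0) (ltW B2_gt0) (h1 w1) (h2 w2).
Qed.

Lemma is_adjoint_op_sum_fst (K : V1 -> V1) (L : V2 -> V2) Ks :
  L 0 = 0 -> is_adjoint ipS ipS (op_sum K L) Ks ->
  is_adjoint ip1 ip1 K (fun v => (Ks (v, 0)).1).
Proof.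
move=> L0 adj v w; have := adj (v, 0) (w, 0).
by rewrite /ip_sum /= L0 ip0r // ip0l // !addr0.
Qed.

Lemma is_adjoint_op_sum_snd (K : V1 -> V1) (L : V2 -> V2) Ks :
  K 0 = 0 -> is_adjoint ipS ipS (op_sum K L) Ks ->
  is_adjoint ip2 ip2 L (fun v => (Ks (0, v)).2).
Proof.
move=> K0 adj v w; have := adj (0, v) (0, w).
by rewrite /ip_sum /= K0 ip0r // ip0l // !add0r.
Qed.

End DirectSum.

Lemma bounded_operator0 (R : realType) (V W : lmodType (complex R))
    (ipV : V -> V -> complex R) (ipW : W -> W -> complex R) (K : V -> W) :
  bounded_operator ipV ipW K -> K 0 = 0.
Proof.
case=> linK _; have := linK 1 0 0; rewrite scaler0 addr0 scale1r => K0.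
by apply: (addrI (K 0)); rewrite addr0 -K0.
Qed.

Section DirectSumFrames.
Variable R : realType.
Local Notation C := (complex R).
Variables (H1 H2 : lmodType C) (ip1 : H1 -> H1 -> C) (ip2 : H2 -> H2 -> C).
Hypotheses (hip1 : inner_product ip1) (hip2 : inner_product ip2).
Variables (K : H1 -> H1) (L : H2 -> H2) (x f : nat -> H1) (y g : nat -> H2).
Local Notation ipS := (ip_sum ip1 ip2).
Local Notation xy := (fun n => (x n, y n)).
Local Notation fg := (fun n => (f n, g n)).

Lemma K_dual_frame_op_sumP : K 0 = 0 -> L 0 = 0 ->
  K_dual_frame ip1 K x f -> K_dual_frame ip2 L y g ->
  K_dual_frame ipS (op_sum K L) xy fg <->
  (forall w, synthesis_eq ip2 y (analysis ip1 f w) 0) /\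
  (forall w, synthesis_eq ip1 x (analysis ip2 g w) 0).
Proof.
move=> K0 L0 [bessel_f recon_f] [bessel_g recon_g]; split.
  case=> _ recon; split=> w.
    have [_ recon2] := (has_sum_pairP hip1 hip2 _ _).1 (recon (w, 0)).
    rewrite /= L0 in recon2; apply: (eq_has_sum recon2) => n.
    by rewrite /ip_sum /= ip0l // addr0.
  have [recon1 _] := (has_sum_pairP hip1 hip2 _ _).1 (recon (0, w)).
  rewrite /= K0 in recon1; apply: (eq_has_sum recon1) => n.
  by rewrite /ip_sum /= ip0l // add0r.
case=> cross_fy cross_gx; split; first exact (bessel_pair hip1 hip2 bessel_f bessel_g).
case=> w1 w2; apply/(has_sum_pairP hip1 hip2); split=> /=.
  rewrite -[K w1]addr0.
  apply: (eq_has_sum (has_sumD hip1 (recon_f w1) (cross_gx w2))) => n.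
  by rewrite /ip_sum /= scalerDl.
rewrite -[L w2]add0r.
apply: (eq_has_sum (has_sumD hip2 (cross_fy w1) (recon_g w2))) => n.
by rewrite /ip_sum /= scalerDl.
Qed.

Lemma K_frame_op_sum (F : nat -> H1 * H2) : K 0 = 0 -> L 0 = 0 ->
  K_frame ip1 K x -> K_frame ip2 L y -> K_dual_frame ipS (op_sum K L) xy F ->
  K_frame ipS (op_sum K L) xy.
Proof.
move=> K0 L0 [? [B1 [_ B1_gt0 hx]]] [? [B2 [_ B2_gt0 hy]]] [[B [B_gt0 bF]] recon].
exists B^-1, (2 * B1 + 2 * B2); split=> [||Ks adj w].
- by rewrite invr_gt0.
- by rewrite addr_gt0 ?mulr_gt0.
have hipS := inner_product_ip_sum hip1 hip2.
split; first exact (K_dual_frame_lower_bound hipS B_gt0 bF recon adj w).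
case: w => w1 w2.
have [_ ub1] := hx _ (is_adjoint_op_sum_fst hip2 L0 adj) w1.
have [_ ub2] := hy _ (is_adjoint_op_sum_snd hip1 K0 adj) w2.
exact: frame_sum_pair_le (ltW B1_gt0) (ltW B2_gt0) ub1 ub2.
Qed.

End DirectSumFrames.

Theorem proposition2p17 (R : realType) (H1 H2 : lmodType (complex R))
    (ip1 : H1 -> H1 -> complex R) (ip2 : H2 -> H2 -> complex R)
    (hH1 : separable_hilbert_space ip1) (hH2 : separable_hilbert_space ip2)
    (K : H1 -> H1) (L : H2 -> H2)
    (hK : bounded_operator ip1 ip1 K) (hL : bounded_operator ip2 ip2 L)
    (x f : nat -> H1) (y g : nat -> H2)
    (hx : K_frame ip1 K x) (hf : K_dual_frame ip1 K x f)
    (hy : K_frame ip2 L y) (hg : K_dual_frame ip2 L y g) :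
  (K_frame (ip_sum ip1 ip2) (op_sum K L) (fun n => (x n, y n)) /\
   K_dual_frame (ip_sum ip1 ip2) (op_sum K L) (fun n => (x n, y n))
     (fun n => (f n, g n)))
  <->
  ((forall w : H1, synthesis_eq ip2 y (analysis ip1 f w) 0) /\
   (forall w : H2, synthesis_eq ip1 x (analysis ip2 g w) 0)).
Proof.
have [[hip1 _] _] := hH1; have [[hip2 _] _] := hH2.
have K0 := bounded_operator0 hK; have L0 := bounded_operator0 hL.
have dualP := K_dual_frame_op_sumP hip1 hip2 K0 L0 hf hg.
split=> [[_ /dualP //] | /dualP dual].
by split=> //; exact (K_frame_op_sum hip1 hip2 K0 L0 hx hy dual).
Qed.
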